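(* For real $\alpha\ne3$ let $$\Phi_\alpha(X)=\frac{1}{3-\alpha}\big(\sigma_1X\sigma_1+\sigma_2X\sigma_2+\sigma_3X\sigma_3-\alpha X\big),\qquad X\in M_2(\mathbb{C}).$$ Then $\Phi_\alpha$ is positive if and only if $\alpha\le1$; it is a Schwarz map if and only if $\alpha\le\frac13$; and it is completely positive if and only if $\alpha\le0$.
   Context: $\sigma_1,\sigma_2,\sigma_3$ are the Pauli matrices; $\Phi_\alpha$ is unital. A unital linear map $\Phi$ is a Schwarz map if $\Phi(X^\dagger X)\ge\Phi(X^\dagger)\Phi(X)$ (in the positive semidefinite order) for all $X\in M_2(\mathbb{C})$. *)

From HB Require Import structures.
From mathcomp Require Import all_boot all_order all_algebra.
From mathcomp Require Import complex mxtens.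
Set Implicit Arguments. Unset Strict Implicit. Unset Printing Implicit Defensive.
Import Order.TTheory GRing.Theory Num.Theory.
Local Open Scope ring_scope.

Section Defs.
Variable R : rcfType.
Local Notation C := (R[i]).

Definition adjmx m n (A : 'M[C]_(m, n)) : 'M[C]_(n, m) := (map_mx Num.conj A)^T.

Definition psd n (A : 'M[C]_n) : Prop :=
  adjmx A = A /\ forall v : 'cV[C]_n, 0 <= (adjmx v *m A *m v) 0 0.

Definition sigma1 : 'M[C]_2 := \matrix_(i < 2, j < 2) (if i != j then 1 else 0).
Definition sigma2 : 'M[C]_2 := \matrix_(i < 2, j < 2)
  (if (i == 0) && (j == 1) then - 'i%C
   else if (i == 1) && (j == 0) then 'i%C else 0).
Definition sigma3 : 'M[C]_2 := \matrix_(i < 2, j < 2)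
  (if i == j then (if i == 0 then 1 else -1) else 0).

Definition Phi (alpha : R) (X : 'M[C]_2) : 'M[C]_2 :=
  ((3 - alpha)^-1)%:C%C *: (sigma1 *m X *m sigma1 + sigma2 *m X *m sigma2
                         + sigma3 *m X *m sigma3 - alpha%:C%C *: X).

Definition positive_map n m (f : 'M[C]_n -> 'M[C]_m) : Prop :=
  forall X, psd X -> psd (f X).

Definition schwarz_map n (f : 'M[C]_n -> 'M[C]_n) : Prop :=
  forall X, psd (f (adjmx X *m X) - f (adjmx X) *m f X).

Definition blockmx k n (X : 'M[C]_(k * n)) (i j : 'I_k) : 'M[C]_n :=
  \matrix_(a, b) X (mxtens_index (i, a)) (mxtens_index (j, b)).

(* id_k (x) f acting on M_k (x) M_n = M_k(M_n) *)
Definition ampl k n m (f : 'M[C]_n -> 'M[C]_m) (X : 'M[C]_(k * n)) : 'M[C]_(k * m) :=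
  \sum_(i < k) \sum_(j < k) (delta_mx i j *t f (blockmx X i j)).

Definition completely_positive n m (f : 'M[C]_n -> 'M[C]_m) : Prop :=
  forall k : nat, positive_map (@ampl k n m f).

End Defs.

(** Expanding the Pauli sum gives
    [Phi_alpha(X) = (2 tr(X) I - (1 + alpha) X) / (3 - alpha)].
    Positivity: for [v] and its rotation [w = (conj v1, - conj v0)] one has
    [tr(X) |v|^2 = <v, X v> + <w, X w>], so [<v, Phi(X) v>] is a nonnegative
    combination of [<v, X v>] and [<w, X w>] when [alpha <= 1]; the projection
    onto [e0] shows that [alpha <= 1] is needed.
    Schwarz: evaluated on [v], the defect [Phi(adj X . X) - Phi(adj X) . Phi(X)]
    is [(3 - alpha)^-2] times [(2 - 6 alpha) |A v|^2 + 2 (3 - alpha) |B (conj v)|^2]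
    for two matrices [A], [B] built from the traceless part of [X]; [X = e01]
    kills the second term.
    Complete positivity: [Phi] is a Kraus sum of the three Pauli conjugations and
    [-alpha] times the identity, all weighted by [(3 - alpha)^-1]; conversely the
    amplification to [M_2 (x) M_2] of the Choi matrix, evaluated on the maximally
    entangled vector, is [-4 alpha / (3 - alpha)]. *)
From HB Require Import structures.
From mathcomp Require Import all_boot all_order all_algebra.
From mathcomp Require Import complex mxtens.
From mathcomp Require Import ring lra.
Set Implicit Arguments. Unset Strict Implicit. Unset Printing Implicit Defensive.
Import Order.TTheory GRing.Theory Num.Theory.
Local Open Scope ring_scope.

Section PauliMap.
Variable R : rcfType.
Local Notation C := (R[i]).
Local Notation RC x := ((x : R)%:C%C).

Lemma conj_real (x : R) : Num.conj (RC x) = RC x.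
Proof. exact: conjc_real. Qed.

Lemma sum_ord2 (F : 'I_2 -> C) : \sum_(i < 2) F i = F 0 + F 1.
Proof. by rewrite !big_ord_recl big_ord0 addr0; congr (_ + F _); apply: val_inj. Qed.

Lemma ord2P (i : 'I_2) : i = 0 \/ i = 1.
Proof. by case: i => [[|[|m]] Hi] //; [left | right]; apply: val_inj. Qed.

Lemma ge0_of_inv_scale (d c : R) :
  d != 0 -> 0 <= d^-1 * 2 -> 0 <= d^-1 * c -> 0 <= c.
Proof.
move=> d0 hd; have dinv_gt0 : 0 < d^-1.
  by rewrite lt_def invr_eq0 d0 -(pmulr_lge0 _ (ltr0n _ 2)).
by rewrite pmulr_rge0.
Qed.

Lemma adjmxE m n (A : 'M[C]_(m, n)) i j : adjmx A i j = Num.conj (A j i).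
Proof. by rewrite !mxE. Qed.

Lemma adjmxK m n (A : 'M[C]_(m, n)) : adjmx (adjmx A) = A.
Proof. by apply/matrixP => i j; rewrite !adjmxE conjCK. Qed.

Lemma adjmxM m n p (A : 'M[C]_(m, n)) (B : 'M[C]_(n, p)) :
  adjmx (A *m B) = adjmx B *m adjmx A.
Proof. by rewrite /adjmx map_mxM trmx_mul. Qed.

Lemma adjmxD m n (A B : 'M[C]_(m, n)) : adjmx (A + B) = adjmx A + adjmx B.
Proof. by apply/matrixP => i j; rewrite !mxE rmorphD. Qed.

Lemma adjmxB m n (A B : 'M[C]_(m, n)) : adjmx (A - B) = adjmx A - adjmx B.
Proof. by apply/matrixP => i j; rewrite !mxE rmorphB. Qed.

Lemma adjmxZ_real m n (c : R) (A : 'M[C]_(m, n)) : adjmx (RC c *: A) = RC c *: adjmx A.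
Proof. by apply/matrixP => i j; rewrite !mxE rmorphM /= conj_real. Qed.

Lemma adjmx_delta m n (i : 'I_m) (j : 'I_n) :
  adjmx (delta_mx i j : 'M[C]_(m, n)) = delta_mx j i.
Proof.
apply/matrixP => a b; rewrite !mxE.
by case: (b == i); case: (a == j); rewrite /= ?conjC0 ?conjC1.
Qed.

Lemma adjmx1 n : adjmx (1%:M : 'M[C]_n) = 1%:M.
Proof.
apply/matrixP => i j; rewrite !mxE eq_sym.
by case: (i == j); rewrite /= ?conjC1 ?conjC0.
Qed.

Lemma adjmx_tens m n p q (A : 'M[C]_(m, n)) (B : 'M[C]_(p, q)) :
  adjmx (A *t B) = adjmx A *t adjmx B.
Proof. by rewrite /adjmx map_mxT trmx_tens. Qed.

Lemma psd_congr m n (L : 'M[C]_(m, n)) (X : 'M[C]_n) :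
  psd X -> psd (L *m X *m adjmx L).
Proof.
case=> hX qX; split; first by rewrite !adjmxM adjmxK hX mulmxA.
by move=> v; have := qX (adjmx L *m v); rewrite adjmxM adjmxK !mulmxA.
Qed.

Lemma psd1 n : psd (1%:M : 'M[C]_n).
Proof.
split=> [|v]; first exact: adjmx1.
rewrite mulmx1 mxE; apply: sumr_ge0 => i _.
by rewrite adjmxE mulrC mul_conjC_ge0.
Qed.

Lemma psd_outer n (u : 'cV[C]_n) : psd (u *m adjmx u).
Proof. by have := psd_congr u (psd1 1); rewrite mulmx1. Qed.

Lemma psdD n (X Y : 'M[C]_n) : psd X -> psd Y -> psd (X + Y).
Proof.
case=> hX qX [hY qY]; split; first by rewrite adjmxD hX hY.
by move=> v; rewrite mulmxDr mulmxDl mxE addr_ge0.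
Qed.

Lemma psdZ n (c : R) (X : 'M[C]_n) : 0 <= c -> psd X -> psd (RC c *: X).
Proof.
move=> c0 [hX qX]; split; first by rewrite adjmxZ_real hX.
by move=> v; rewrite -scalemxAr -scalemxAl mxE mulr_ge0 // ler0c.
Qed.

Lemma qform_delta n (M : 'M[C]_n) (p : 'I_n) :
  (adjmx (delta_mx p 0 : 'cV[C]_n) *m M *m (delta_mx p 0 : 'cV[C]_n)) 0 0 = M p p.
Proof. by rewrite adjmx_delta -rowE -colE !mxE. Qed.

Lemma psd_diag_ge0 n (M : 'M[C]_n) (p : 'I_n) : psd M -> 0 <= M p p.
Proof. by case=> _ /(_ (delta_mx p (0 : 'I_1))); rewrite qform_delta. Qed.

Lemma psd_delta n (p : 'I_n) : psd (delta_mx p p : 'M[C]_n).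
Proof. by have := psd_outer (delta_mx p (0 : 'I_1)); rewrite adjmx_delta mul_delta_mx. Qed.

Lemma qform2E (M : 'M[C]_2) (v : 'cV[C]_2) : (adjmx v *m M *m v) 0 0 =
  Num.conj (v 0 0) * (M 0 0 * v 0 0 + M 0 1 * v 1 0)
  + Num.conj (v 1 0) * (M 1 0 * v 0 0 + M 1 1 * v 1 0).
Proof. by rewrite !mxE !sum_ord2 !mxE !sum_ord2 !adjmxE; ring. Qed.

Lemma PhiE (alpha : R) (X : 'M[C]_2) : Phi alpha X =
  \matrix_(i, j) (RC ((3 - alpha)^-1) *
    ((i == j)%:R * 2 * (X 0 0 + X 1 1) - (1 + RC alpha) * X i j)).
Proof.
have ii : ('i%C : C) * 'i%C = -1 by rewrite -expr2 sqr_i.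
apply/matrixP => i j; rewrite /Phi !mxE !sum_ord2 !mxE !sum_ord2 !mxE.
move: (RC _) (RC alpha) ('i%C : C) ii => k a z ii.
by case: (ord2P i) => ->; case: (ord2P j) => -> /=; ring: ii.
Qed.

Lemma Phi_adjmx (alpha : R) (X : 'M[C]_2) : Phi alpha (adjmx X) = adjmx (Phi alpha X).
Proof.
apply/matrixP => i j; rewrite !PhiE !mxE.
by rewrite !(rmorphM, rmorphB, rmorphD, rmorph_nat) /= !conj_real eq_sym.
Qed.

Lemma Phi_hermitian (alpha : R) (X : 'M[C]_2) :
  adjmx X = X -> adjmx (Phi alpha X) = Phi alpha X.
Proof. by move=> hX; rewrite -Phi_adjmx hX. Qed.

Definition rot2 (v : 'cV[C]_2) : 'cV[C]_2 :=
  \col_i (if i == 0 then Num.conj (v 1 0) else - Num.conj (v 0 0)).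

Lemma qform_Phi (alpha : R) (X : 'M[C]_2) (v : 'cV[C]_2) :
  (adjmx v *m Phi alpha X *m v) 0 0 = RC ((3 - alpha)^-1) *
    (2 * (adjmx (rot2 v) *m X *m rot2 v) 0 0
     + (1 - RC alpha) * (adjmx v *m X *m v) 0 0).
Proof. by rewrite !qform2E PhiE !mxE /= rmorphN /= !conjCK; ring. Qed.

Lemma Phi_positive (alpha : R) : alpha <= 1 -> positive_map (Phi alpha).
Proof.
move=> alpha_le1 X [hX qX]; split=> [|v]; first exact: Phi_hermitian.
have k_ge0 : 0 <= RC ((3 - alpha)^-1).
  by rewrite ler0c invr_ge0; lra.
have a_ge0 : 0 <= 1 - RC alpha.
  by rewrite -(rmorph1 (real_complex R)) -rmorphB ler0c subr_ge0.
by rewrite qform_Phi mulr_ge0 // addr_ge0 ?mulr_ge0.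
Qed.

Lemma Phi_delta (alpha : R) (i j a b : 'I_2) : Phi alpha (delta_mx i j) a b =
  RC ((3 - alpha)^-1 *
      ((a == b)%:R * (i == j)%:R * 2 - (1 + alpha) * ((a == i) && (b == j))%:R)).
Proof.
rewrite PhiE !mxE !(rmorphM, rmorphB, rmorphD, rmorph_nat) /= rmorph1.
by case: (ord2P i) => ->; case: (ord2P j) => ->;
   case: (ord2P a) => ->; case: (ord2P b) => -> /=; ring.
Qed.

Lemma positive_Phi_le1 (alpha : R) :
  alpha != 3 -> positive_map (Phi alpha) -> alpha <= 1.
Proof.
move=> alpha_neq3 hP; have pE := hP _ (psd_delta (0 : 'I_2)).
have e0 : 1 * 1 * 2 - (1 + alpha) * 1 = 1 - alpha by ring.
have e1 : 1 * 1 * 2 - (1 + alpha) * 0 = 2 by ring.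
have := psd_diag_ge0 1 pE; have := psd_diag_ge0 0 pE.
rewrite !Phi_delta !ler0c /= e0 e1 => h0 h1.
rewrite -subr_ge0; apply: (ge0_of_inv_scale _ h1 h0).
by rewrite subr_eq0 eq_sym.
Qed.

Definition schwarz_defect n (f : 'M[C]_n -> 'M[C]_n) (X : 'M[C]_n) : 'M[C]_n :=
  f (adjmx X *m X) - f (adjmx X) *m f X.

Lemma schwarz_defect_hermitian n (f : 'M[C]_n -> 'M[C]_n) (X : 'M[C]_n) :
  (forall Y, f (adjmx Y) = adjmx (f Y)) ->
  adjmx (schwarz_defect f X) = schwarz_defect f X.
Proof. by move=> fA; rewrite adjmxB adjmxM -!fA adjmxM !adjmxK. Qed.

Definition normsq2 (x y : C) : C := x * Num.conj x + y * Num.conj y.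

Lemma normsq2_ge0 (x y : C) : 0 <= normsq2 x y.
Proof. by rewrite addr_ge0 // mul_conjC_ge0. Qed.

Lemma qform_schwarz_defect_Phi (alpha : R) (X : 'M[C]_2) (v : 'cV[C]_2) :
  alpha != 3 ->
  (adjmx v *m schwarz_defect (Phi alpha) X *m v) 0 0 =
  RC ((3 - alpha)^-1) ^+ 2 *
  ((2 - 6 * RC alpha) *
     normsq2 ((X 0 0 - X 1 1) / 2 * v 0 0 + X 0 1 * v 1 0)
             (X 1 0 * v 0 0 - (X 0 0 - X 1 1) / 2 * v 1 0)
   + 2 * (3 - RC alpha) *
     normsq2 ((X 0 0 - X 1 1) / 2 * Num.conj (v 1 0) - X 0 1 * Num.conj (v 0 0))
             (X 1 0 * Num.conj (v 1 0) + (X 0 0 - X 1 1) / 2 * Num.conj (v 0 0))).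
Proof.
move=> alpha_neq3.
have den_neq0 : 3 - RC alpha != 0.
  rewrite -(rmorph_nat (real_complex R) 3) -rmorphB /=.
  by rewrite eq_complex /= eqxx andbT subr_eq0 eq_sym.
rewrite /normsq2 !(rmorphM, rmorphD, rmorphB, rmorphN, fmorphV, rmorph_nat) /= !conjCK.
rewrite qform2E /schwarz_defect !PhiE !mxE !sum_ord2 !mxE /= fmorphV rmorphB /= rmorph_nat.
by move: den_neq0; move: (RC alpha) => a den_neq0; field.
Qed.

Lemma Phi_schwarz (alpha : R) : alpha <= 3^-1 -> schwarz_map (Phi alpha).
Proof.
move=> alpha_le X.
have alpha_neq3 : alpha != 3 by apply/eqP => e; move: alpha_le; rewrite e; lra.
split=> [|v]; first by apply: schwarz_defect_hermitian; apply: Phi_adjmx.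
have c0 : 0 <= 2 - 6 * RC alpha.
  rewrite -(rmorph_nat (real_complex R) 2) -(rmorph_nat (real_complex R) 6).
  by rewrite -rmorphM -rmorphB ler0c; lra.
have c1 : 0 <= 2 * (3 - RC alpha).
  rewrite -(rmorph_nat (real_complex R) 2) -(rmorph_nat (real_complex R) 3).
  by rewrite -rmorphB -rmorphM ler0c; lra.
have k0 : 0 <= RC ((3 - alpha)^-1) by rewrite ler0c invr_ge0; lra.
rewrite qform_schwarz_defect_Phi //.
apply: mulr_ge0; first exact: exprn_ge0.
by rewrite addr_ge0 // mulr_ge0 // normsq2_ge0.
Qed.

Lemma schwarz_Phi_le (alpha : R) :
  alpha != 3 -> schwarz_map (Phi alpha) -> alpha <= 3^-1.
Proof.
move=> alpha_neq3 hS.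
have := psd_diag_ge0 1 (hS (delta_mx 0 1)).
rewrite -qform_delta qform_schwarz_defect_Phi // /normsq2 !mxE /= subrr.
rewrite !(oppr0, conjC0, conjC1, mul0r, mulr0, mul1r, mulr1, add0r, addr0, subr0).
have -> : 2 - 6 * RC alpha = RC (2 - 6 * alpha).
  by rewrite rmorphB rmorphM /= !rmorph_nat.
rewrite -rmorphXn -rmorphM ler0c pmulr_rge0; first lra.
by rewrite lt_def sqrf_eq0 invr_eq0 subr_eq0 eq_sym alpha_neq3 sqr_ge0.
Qed.

Lemma sum_mxtens_index m n (F : 'I_(m * n) -> C) :
  \sum_(p < m * n) F p = \sum_(i < m) \sum_(a < n) F (mxtens_index (i, a)).
Proof.
rewrite pair_big /= (reindex (@mxtens_index m n)) /=; first by apply: eq_bigr => -[].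
by exists (@mxtens_unindex m n) => p _; rewrite (mxtens_indexK, mxtens_unindexK).
Qed.

Lemma amplE k n m (f : 'M[C]_n -> 'M[C]_m) (X : 'M[C]_(k * n)) i a j b :
  ampl f X (mxtens_index (i, a)) (mxtens_index (j, b)) = f (blockmx X i j) a b.
Proof.
rewrite /ampl summxE (bigD1 i) //= summxE (bigD1 j) //= tensmxE !mxE !eqxx mul1r.
rewrite big1 ?addr0 => [|j' nj']; last by rewrite tensmxE mxE eqxx eq_sym (negbTE nj') mul0r.
rewrite big1 ?addr0 // => i' ni'; rewrite summxE big1 // => j' _.
by rewrite tensmxE mxE (eq_sym i i') (negbTE ni') mul0r.
Qed.

Lemma eq_ampl k n m (f g : 'M[C]_n -> 'M[C]_m) (X : 'M[C]_(k * n)) :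
  f =1 g -> ampl f X = ampl g X.
Proof. by move=> fg; rewrite /ampl; under eq_bigr do under eq_bigr do rewrite fg. Qed.

Lemma amplD k n m (f g : 'M[C]_n -> 'M[C]_m) (X : 'M[C]_(k * n)) :
  ampl (fun B => f B + g B) X = ampl f X + ampl g X.
Proof.
apply/matrixP => p q.
case: (mxtens_indexP p) => i a; case: (mxtens_indexP q) => j b.
by rewrite mxE !amplE mxE.
Qed.

Lemma amplZ k n m (c : C) (f : 'M[C]_n -> 'M[C]_m) (X : 'M[C]_(k * n)) :
  ampl (fun B => c *: f B) X = c *: ampl f X.
Proof.
apply/matrixP => p q.
case: (mxtens_indexP p) => i a; case: (mxtens_indexP q) => j b.
by rewrite mxE !amplE mxE.
Qed.

Lemma ampl_id k n (X : 'M[C]_(k * n)) : ampl id X = X.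
Proof.
apply/matrixP => p q.
case: (mxtens_indexP p) => i a; case: (mxtens_indexP q) => j b.
by rewrite amplE mxE.
Qed.

Lemma ampl_conjugation k n m (K : 'M[C]_(m, n)) (X : 'M[C]_(k * n)) :
  ampl (fun B => K *m B *m adjmx K) X = (1%:M *t K) *m X *m adjmx (1%:M *t K).
Proof.
rewrite -[in RHS](ampl_id X) /ampl adjmx_tens adjmx1 mulmx_sumr mulmx_suml.
apply: eq_bigr => i _; rewrite mulmx_sumr mulmx_suml; apply: eq_bigr => j _.
by rewrite !tensmx_mul mul1mx mulmx1.
Qed.

Lemma sigma_hermitian :
  [/\ adjmx (sigma1 R) = sigma1 R, adjmx (sigma2 R) = sigma2 R
    & adjmx (sigma3 R) = sigma3 R].
Proof.
by split; apply/matrixP => i j; rewrite !mxE;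
  case: (ord2P i) => ->; case: (ord2P j) => -> /=;
  rewrite ?conjC0 ?conjC1 ?conjCN1 ?rmorphN /= ?conjCi ?opprK.
Qed.

Lemma Phi_kraus (alpha : R) (X : 'M[C]_2) : Phi alpha X =
  RC ((3 - alpha)^-1) *: (sigma1 R *m X *m adjmx (sigma1 R))
  + RC ((3 - alpha)^-1) *: (sigma2 R *m X *m adjmx (sigma2 R))
  + RC ((3 - alpha)^-1) *: (sigma3 R *m X *m adjmx (sigma3 R))
  + RC (- alpha * (3 - alpha)^-1) *: (1%:M *m X *m adjmx 1%:M).
Proof.
have [-> -> ->] := sigma_hermitian.
rewrite /Phi adjmx1 mulmx1 mul1mx.
by apply/matrixP => i j; rewrite !mxE rmorphM rmorphN /=; ring.
Qed.

Lemma Phi_completely_positive (alpha : R) :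
  alpha <= 0 -> completely_positive (Phi alpha).
Proof.
move=> alpha_le0 k X pX.
have k0 : 0 <= (3 - alpha)^-1 by rewrite invr_ge0; lra.
have k1 : 0 <= - alpha * (3 - alpha)^-1 by rewrite mulr_ge0 //; lra.
rewrite (eq_ampl X (Phi_kraus alpha)) !amplD !amplZ !ampl_conjugation.
apply: psdD; first apply: psdD; first apply: psdD.
all: apply: psdZ; [by [] | exact: psd_congr].
Qed.

Definition entangled n : 'cV[C]_(n * n) :=
  \col_p ((mxtens_unindex p).1 == (mxtens_unindex p).2)%:R.

Lemma entangledE n (i a : 'I_n) : entangled n (mxtens_index (i, a)) 0 = (i == a)%:R.
Proof. by rewrite mxE mxtens_indexK. Qed.

Lemma sum_mulr_eq (n : nat) (j : 'I_n) (F : 'I_n -> C) :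
  \sum_(b < n) F b * (j == b)%:R = F j.
Proof.
rewrite (bigD1 j) //= eqxx mulr1 big1 ?addr0 // => b nbj.
by rewrite eq_sym (negbTE nbj) mulr0.
Qed.

Lemma qform_entangled n (M : 'M[C]_(n * n)) :
  (adjmx (entangled n) *m M *m entangled n) 0 0 =
  \sum_(j < n) \sum_(i < n) M (mxtens_index (i, i)) (mxtens_index (j, j)).
Proof.
rewrite mxE sum_mxtens_index; apply: eq_bigr => j _.
under eq_bigr do rewrite entangledE.
rewrite sum_mulr_eq mxE sum_mxtens_index; apply: eq_bigr => i _.
under eq_bigr do rewrite adjmxE entangledE rmorph_nat mulrC.
exact: sum_mulr_eq.
Qed.

Lemma blockmx_entangled n (i j : 'I_n) :
  blockmx (entangled n *m adjmx (entangled n)) i j = delta_mx i j.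
Proof.
apply/matrixP => a b; rewrite !mxE big_ord1 adjmxE !entangledE rmorph_nat.
by rewrite -natrM mulnb (eq_sym a) (eq_sym b).
Qed.

Lemma cp_Phi_le0 (alpha : R) :
  alpha != 3 -> completely_positive (Phi alpha) -> alpha <= 0.
Proof.
move=> alpha_neq3 hCP; have pA := hCP 2%N _ (psd_outer (entangled 2)).
have := proj2 pA (entangled 2); rewrite qform_entangled.
under eq_bigr do under eq_bigr do rewrite amplE blockmx_entangled Phi_delta.
under eq_bigr do rewrite -rmorph_sum.
rewrite -rmorph_sum ler0c !big_ord_recl !big_ord0 /= => h_choi.
have := psd_diag_ge0 (mxtens_index ((0 : 'I_2), (1 : 'I_2))) pA.
rewrite amplE blockmx_entangled Phi_delta ler0c /= mulr0 subr0 !mul1r => h_diag.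
rewrite -oppr_ge0 -(@pmulr_rge0 _ 4) //.
apply: (ge0_of_inv_scale _ h_diag); first by rewrite subr_eq0 eq_sym.
by move: h_choi; rewrite !(mul0r, mul1r, mulr1, addr0, add0r); nra.
Qed.

End PauliMap.

Theorem corollary4 (R : rcfType) (alpha : R) (halpha : alpha != 3) :
  (positive_map (Phi alpha) <-> alpha <= 1) /\
  (schwarz_map (Phi alpha) <-> alpha <= 3^-1) /\
  (completely_positive (Phi alpha) <-> alpha <= 0).
Proof.
split; first by split; [exact: positive_Phi_le1 | exact: Phi_positive].
split; first by split; [exact: schwarz_Phi_le | exact: Phi_schwarz].
by split; [exact: cp_Phi_le0 | exact: Phi_completely_positive].
Qed.
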